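(* Let $S$ be a nonempty compact (not necessarily convex) set in the plane and fix $0<\alpha<\pi$. Then there exist a point $O$ and two rays $q,r$ emanating from $O$ forming an angle $\alpha$ such that $S$ is contained in the closed convex wedge bounded by $q$ and $r$, $q$ meets the convex hull of $S$ in exactly one point $X$, $r$ meets the convex hull of $S$ in exactly one point $Y$, $X,Y\in S$, and $|OX|=|OY|$. *)

From Stdlib Require Import Reals.
Open Scope R_scope.

Definition pt := (R * R)%type.

Definition padd (p q : pt) : pt := (fst p + fst q, snd p + snd q).
Definition pscale (t : R) (p : pt) : pt := (t * fst p, t * snd p).
Definition dot (p q : pt) : R := fst p * fst q + snd p * snd q.
Definition norm (p : pt) : R := sqrt (dot p p).
Definition pdist (p q : pt) : R :=
  sqrt ((fst p - fst q) ^ 2 + (snd p - snd q) ^ 2).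

Definition seq_cv (u : nat -> pt) (l : pt) : Prop :=
  forall eps, eps > 0 -> exists N, forall n, (n >= N)%nat -> pdist (u n) l < eps.
Definition closed_set (S : pt -> Prop) : Prop :=
  forall (u : nat -> pt) (l : pt), (forall n, S (u n)) -> seq_cv u l -> S l.
Definition bounded_set (S : pt -> Prop) : Prop :=
  exists M, forall p, S p -> norm p <= M.
(* compact in R^2 = closed and bounded (Heine-Borel) *)
Definition compact_set (S : pt -> Prop) : Prop := closed_set S /\ bounded_set S.

Definition convex_set (C : pt -> Prop) : Prop :=
  forall p q t, C p -> C q -> 0 <= t <= 1 ->
    C (padd (pscale (1 - t) p) (pscale t q)).
Definition conv_hull (S : pt -> Prop) (p : pt) : Prop :=
  forall C, convex_set C -> (forall x, S x -> C x) -> C p.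

Definition ray (O u : pt) (p : pt) : Prop :=
  exists t, 0 <= t /\ p = padd O (pscale t u).
Definition wedge (O u v : pt) (p : pt) : Prop :=
  exists s t, 0 <= s /\ 0 <= t /\ p = padd O (padd (pscale s u) (pscale t v)).

(* Directions of the plane are parametrised by an angle: dir t = (cos t, sin t).  For a
   selection X t of points of S minimising the linear functional <., dir t>, the support
   function h t = <X t, dir t> ([support]) is Lipschitz and 2π-periodic; let H be its
   primitive ([primitive]).  Fix the angle alpha, put g = π - alpha and consider

       phi t = cos(alpha/2) (h t + h (t+g)) - sin(alpha/2) (H (t+g) - H t).

   phi is continuous and periodic, hence has a minimiser tm.  Freezing the contact points
   of the two support lines with inner normals dir tm and dir (tm+g) gives a smooth
   majorant of phi touching it at tm; Fermat's rule for it (lemma [stationarity]) yields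
   one linear relation between the tangential coordinates of the contact points.  This
   relation forces each support line to meet S in a single point ([contact_unique_left],
   [contact_unique_right]) and the two contact points to be equidistant from the apex of
   the wedge bounded by these lines ([balanced_offsets]). *)

From Coquelicot Require Import Coquelicot.
From Stdlib Require Import Reals Lra Nsatz ClassicalEpsilon.
Open Scope R_scope.

Definition dir (t : R) : pt := (cos t, sin t).
Definition dirL (t : R) : pt := (- sin t, cos t).
Definition dirR (t : R) : pt := (sin t, - cos t).

(* Pythagoras for the unit circle, in the product form used by [nsatz] and [ring]. *)
Lemma cos_sin_sq (t : R) : cos t * cos t + sin t * sin t = 1.
Proof. pose proof (sin2_cos2 t) as H; unfold Rsqr in H; lra. Qed.

Lemma dist2_frame (t : R) (p q : pt) :
  (fst p - fst q) ^ 2 + (snd p - snd q) ^ 2 =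
  (dot p (dir t) - dot q (dir t)) ^ 2 + (dot p (dirL t) - dot q (dirL t)) ^ 2.
Proof.
  pose proof (cos_sin_sq t). destruct p, q; unfold dot, dir, dirL; simpl. nsatz.
Qed.

Lemma pt_eq_frame (t : R) (p q : pt) :
  dot p (dir t) = dot q (dir t) -> dot p (dirL t) = dot q (dirL t) -> p = q.
Proof.
  pose proof (cos_sin_sq t). destruct p, q; unfold dot, dir, dirL; simpl.
  intros; f_equal; nsatz.
Qed.

Lemma frame_point_coords (t m l : R) :
  let L := padd (pscale m (dir t)) (pscale l (dirL t)) in
  dot L (dir t) = m /\ dot L (dirL t) = l.
Proof.
  pose proof (cos_sin_sq t). unfold dot, padd, pscale, dir, dirL; simpl.
  split; nsatz.
Qed.

Lemma pdist_lt_frame (t eps : R) (p q : pt) :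
  Rabs (dot p (dir t) - dot q (dir t)) < eps / 2 ->
  Rabs (dot p (dirL t) - dot q (dirL t)) < eps / 2 -> pdist p q < eps.
Proof.
  intros Ha Hb. unfold pdist. rewrite (dist2_frame t).
  set (a := dot p (dir t) - dot q (dir t)) in *.
  set (b := dot p (dirL t) - dot q (dirL t)) in *.
  apply Rabs_def2 in Ha, Hb.
  apply Rlt_le_trans with (sqrt (eps ^ 2)).
  - apply sqrt_lt_1_alt. split; nra.
  - rewrite sqrt_pow2; lra.
Qed.

Lemma pdist_along (O u : pt) (s : R) : 0 <= s -> dot u u = 1 ->
  pdist O (padd O (pscale s u)) = s.
Proof.
  intros Hs Hu. unfold pdist, padd, pscale; cbn [fst snd].
  unfold dot in Hu.
  replace ((fst O - (fst O + s * fst u)) ^ 2 + (snd O - (snd O + s * snd u)) ^ 2)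
    with (s ^ 2) by (rewrite <- (Rmult_1_r (s ^ 2)), <- Hu; ring).
  apply sqrt_pow2; exact Hs.
Qed.

Lemma norm_unit (u : pt) : dot u u = 1 -> norm u = 1.
Proof. intro H. unfold norm. rewrite H. apply sqrt_1. Qed.

Lemma dirL_unit (t : R) : dot (dirL t) (dirL t) = 1.
Proof. unfold dot, dirL; cbn [fst snd]. rewrite <- (cos_sin_sq t). ring. Qed.

Lemma dirR_unit (t : R) : dot (dirR t) (dirR t) = 1.
Proof. unfold dot, dirR; cbn [fst snd]. rewrite <- (cos_sin_sq t). ring. Qed.

Lemma dirL_perp (t : R) : dot (dirL t) (dir t) = 0.
Proof. unfold dot, dirL, dir; cbn [fst snd]. ring. Qed.

Lemma dirR_perp (t : R) : dot (dirR t) (dir t) = 0.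
Proof. unfold dot, dirR, dir; cbn [fst snd]. ring. Qed.

Lemma dot_dirL_dirR (t g : R) : dot (dirL t) (dirR (t + g)) = - cos g.
Proof.
  unfold dot, dirL, dirR; cbn [fst snd].
  replace (cos g) with (cos (t + g - t)) by (f_equal; ring). rewrite cos_minus. ring.
Qed.

Lemma coords_le_norm (p : pt) : Rabs (fst p) <= norm p /\ Rabs (snd p) <= norm p.
Proof.
  unfold norm, dot. split; rewrite <- sqrt_Rsqr_abs; apply sqrt_le_1_alt; unfold Rsqr; nra.
Qed.

Lemma dir_periodic (t : R) : dir (t + 2 * PI) = dir t.
Proof. unfold dir. rewrite cos_plus, sin_plus, cos_2PI, sin_2PI. f_equal; ring. Qed.

Lemma dir_dot_lipschitz (p : pt) (x y : R) :
  Rabs (dot p (dir x) - dot p (dir y)) <= 2 * norm p * Rabs (x - y).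
Proof.
  destruct (MVT_abs cos (fun c => - sin c) y x) as [c [Hc _]].
  { intros; apply derivable_pt_lim_cos. }
  destruct (MVT_abs sin cos y x) as [c' [Hc' _]].
  { intros; apply derivable_pt_lim_sin. }
  assert (Hcos : Rabs (cos x - cos y) <= Rabs (x - y)).
  { rewrite Hc, Rabs_Ropp. pose proof (Rabs_pos (x - y)).
    pose proof (SIN_bound c). assert (Rabs (sin c) <= 1) by (apply Rabs_le; lra). nra. }
  assert (Hsin : Rabs (sin x - sin y) <= Rabs (x - y)).
  { rewrite Hc'. pose proof (Rabs_pos (x - y)).
    pose proof (COS_bound c'). assert (Rabs (cos c') <= 1) by (apply Rabs_le; lra). nra. }
  destruct (coords_le_norm p) as [H1 H2].
  unfold dot, dir; cbn [fst snd].
  replace (fst p * cos x + snd p * sin x - (fst p * cos y + snd p * sin y))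
    with (fst p * (cos x - cos y) + snd p * (sin x - sin y)) by ring.
  eapply Rle_trans; [apply Rabs_triang|]. rewrite !Rabs_mult.
  pose proof (Rabs_pos (fst p)). pose proof (Rabs_pos (snd p)).
  pose proof (Rabs_pos (cos x - cos y)). pose proof (Rabs_pos (sin x - sin y)). nra.
Qed.

Lemma dir_dot_derive (p : pt) (t : R) : is_derive (fun s => dot p (dir s)) t (dot p (dirL t)).
Proof. unfold dot, dir, dirL; cbn [fst snd]. auto_derive; [exact I | ring]. Qed.

Lemma ray_dot (O u n p : pt) : dot u n = 0 -> ray O u p -> dot p n = dot O n.
Proof.
  intros Hu [s [_ ->]]. transitivity (dot O n + s * dot u n).
  - unfold dot, padd, pscale; cbn [fst snd]. ring.
  - rewrite Hu. ring.
Qed.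

Lemma dot_bounded (S : pt -> Prop) (d : pt) : bounded_set S ->
  exists K, forall p, S p -> Rabs (dot p d) <= K.
Proof.
  intros [M HM]. exists (M * (Rabs (fst d) + Rabs (snd d))). intros p Hp.
  destruct (coords_le_norm p) as [Hx Hy]. specialize (HM p Hp). unfold dot.
  eapply Rle_trans; [apply Rabs_triang|]. rewrite !Rabs_mult.
  pose proof (Rabs_pos (fst d)). pose proof (Rabs_pos (snd d)). nra.
Qed.

Lemma linear_inf (S : pt -> Prop) (d : pt) : (exists p, S p) -> bounded_set S ->
  exists m, (forall p, S p -> m <= dot p d) /\
            (forall eps, 0 < eps -> exists p, S p /\ dot p d < m + eps).
Proof.
  intros [p0 Hp0] Hbd. destruct (dot_bounded S d Hbd) as [K HK].
  set (E := fun r => exists p, S p /\ r = - dot p d).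
  destruct (completeness E) as [l [Hub Hleast]].
  - exists K. intros r [p [Hp ->]]. specialize (HK p Hp).
    unfold Rabs in HK; destruct Rcase_abs; lra.
  - exists (- dot p0 d), p0. auto.
  - exists (- l). split.
    + intros p Hp. assert (Hl : - dot p d <= l) by (apply Hub; exists p; auto). lra.
    + intros eps Heps. apply NNPP. intro Hno.
      assert (Hl : l <= l - eps); [|lra].
      apply Hleast. intros r [p [Hp ->]]. apply Rnot_lt_le. intro Hlt.
      apply Hno. exists p. split; [exact Hp | lra].
Qed.

Lemma cluster_value (g : nat -> R) (K : R) : (forall n, Rabs (g n) <= K) ->
  exists l, forall eps N, 0 < eps -> exists n, (N <= n)%nat /\ Rabs (g n - l) < eps.
Proof.
  intro Hg.
  destruct (Bolzano_Weierstrass g (fun c => - K <= c <= K)) as [l Hl].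
  - apply compact_P3.
  - intro n. specialize (Hg n). unfold Rabs in Hg; destruct Rcase_abs; lra.
  - exists l. intros eps N Heps.
    destruct (Hl (disc l (mkposreal _ Heps)) N) as [n [Hn Hv]].
    + exists (mkposreal _ Heps). intros x Hx. exact Hx.
    + exists n. split; [exact Hn | exact Hv].
Qed.

Lemma inv_INR_small (eps : R) : 0 < eps ->
  exists N, forall n, (N <= n)%nat -> / (INR n + 1) < eps.
Proof.
  intro Heps. destruct (archimed_cor1 eps Heps) as [N [HN HN0]].
  exists N. intros n Hn. apply Rle_lt_trans with (/ INR N); [|exact HN].
  apply Rinv_le_contravar; [apply lt_0_INR; exact HN0|].
  pose proof (le_INR _ _ Hn). lra.
Qed.

Lemma closed_of_approx (S : pt -> Prop) (L : pt) : closed_set S ->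
  (forall eps, 0 < eps -> exists q, S q /\ pdist q L < eps) -> S L.
Proof.
  intros Hcl Happ.
  assert (Hn : forall n : nat, exists q, S q /\ pdist q L < / (INR n + 1)).
  { intro n. apply Happ. apply Rinv_0_lt_compat. pose proof (pos_INR n). lra. }
  destruct (choice _ Hn) as [u Hu].
  apply (Hcl u); [intro n; apply Hu|].
  intros eps Heps. destruct (inv_INR_small eps Heps) as [N HN].
  exists N. intros n Hnn. eapply Rlt_trans; [apply Hu | apply HN; exact Hnn].
Qed.

(* Along a minimising
   sequence the coordinate in direction dir t converges to the infimum m; a cluster value l
   of the orthogonal coordinate then gives a limit point m dir t + l dirL t in S. *)
Lemma linear_min_attained (S : pt -> Prop) (t : R) : (exists p, S p) -> compact_set S ->
  exists X, S X /\ forall p, S p -> dot X (dir t) <= dot p (dir t).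
Proof.
  intros Hne [Hcl Hbd].
  destruct (linear_inf S (dir t) Hne Hbd) as [m [Hm Happ]].
  assert (Hseq : forall n : nat, exists p, S p /\ dot p (dir t) < m + / (INR n + 1)).
  { intro n. apply Happ. apply Rinv_0_lt_compat. pose proof (pos_INR n). lra. }
  destruct (choice _ Hseq) as [pn Hpn].
  destruct (dot_bounded S (dirL t) Hbd) as [K HK].
  destruct (cluster_value (fun n => dot (pn n) (dirL t)) K) as [l Hl].
  { intro n. apply HK, Hpn. }
  set (L := padd (pscale m (dir t)) (pscale l (dirL t))).
  destruct (frame_point_coords t m l) as [HL1 HL2]; fold L in HL1, HL2.
  exists L. split.
  - apply (closed_of_approx S L Hcl). intros eps Heps.
    destruct (inv_INR_small (eps / 2)) as [N HN]; [lra|].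
    destruct (Hl (eps / 2) N) as [n [Hn Hln]]; [lra|].
    exists (pn n). split; [apply Hpn|].
    apply (pdist_lt_frame t); rewrite ?HL1, ?HL2; [|exact Hln].
    destruct (Hpn n) as [Hs Hlt]. pose proof (Hm _ Hs). pose proof (HN n Hn).
    rewrite Rabs_pos_eq; lra.
  - intros p Hp. rewrite HL1. apply Hm, Hp.
Qed.

Lemma lipschitz_continuous (f : R -> R) (K : R) : 0 <= K ->
  (forall x y, Rabs (f x - f y) <= K * Rabs (x - y)) -> forall x, continuity_pt f x.
Proof.
  intros HK Hf x eps Heps. exists (eps / (K + 1)). split; [apply Rdiv_lt_0_compat; lra|].
  intros y [_ Hy]. simpl in *. unfold R_dist in *.
  eapply Rle_lt_trans; [apply Hf|].
  apply Rle_lt_trans with (K * (eps / (K + 1))); [apply Rmult_le_compat_l; lra|].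
  apply (Rmult_lt_reg_r (K + 1)); [lra|].
  replace (K * (eps / (K + 1)) * (K + 1)) with (K * eps) by (field; lra). nra.
Qed.

(* Throughout this section S is bounded by M and X t is a point of S minimising <., dir t>,
   so that support t is the value of the support function of S at the inner normal dir t. *)
Section SupportFunction.

Variable S : pt -> Prop.
Variable X : R -> pt.
Hypothesis X_in : forall t, S (X t).
Hypothesis X_min : forall t p, S p -> dot (X t) (dir t) <= dot p (dir t).
Variable M : R.
Hypothesis S_bounded : forall p, S p -> norm p <= M.

Definition support (t : R) : R := dot (X t) (dir t).

Lemma bound_nonneg : 0 <= M.
Proof.
  apply Rle_trans with (norm (X 0)); [apply sqrt_pos | apply S_bounded, X_in].
Qed.

Lemma support_le (t : R) (p : pt) : S p -> support t <= dot p (dir t).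
Proof. apply X_min. Qed.

(* The support function is Lipschitz: both <X x, dir .> and <X y, dir .> dominate it and
   are Lipschitz, so the one-sided estimates combine. *)
Lemma support_lipschitz (x y : R) : Rabs (support x - support y) <= 2 * M * Rabs (x - y).
Proof.
  assert (Hupper : forall a b, support a - support b <= 2 * M * Rabs (a - b)).
  { intros a b. pose proof (support_le a (X b) (X_in b)).
    pose proof (dir_dot_lipschitz (X b) a b) as Hl.
    pose proof (S_bounded _ (X_in b)). pose proof (Rabs_pos (a - b)).
    apply Rabs_le_between in Hl. unfold support in *. nra. }
  apply Rabs_le. split; [|apply Hupper].
  rewrite Rabs_minus_sym. pose proof (Hupper y x). lra.
Qed.

Lemma support_continuous (x : R) : continuity_pt support x.
Proof.
  apply (lipschitz_continuous _ (2 * M)); [pose proof bound_nonneg; lra|].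
  exact support_lipschitz.
Qed.

Lemma support_periodic (t : R) : support (t + 2 * PI) = support t.
Proof.
  pose proof (support_le (t + 2 * PI) (X t) (X_in t)).
  pose proof (support_le t (X (t + 2 * PI)) (X_in _)).
  unfold support in *. rewrite dir_periodic in *. lra.
Qed.

Definition primitive (x : R) : R := RInt support 0 x.

Lemma primitive_derive (x : R) : is_derive primitive x (support x).
Proof.
  assert (Hc : forall y, continuous support y).
  { intro y. apply continuity_pt_filterlim, support_continuous. }
  apply (is_derive_RInt support primitive 0 x); [|apply Hc].
  apply filter_forall. intro b. unfold primitive.
  apply (RInt_correct (V := R_CompleteNormedModule)), ex_RInt_continuous.
  intros; apply Hc.
Qed.

Lemma primitive_shift_derive (c x : R) :
  is_derive (fun y => primitive (y + c)) x (support (x + c)).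
Proof.
  replace (support (x + c)) with (1 * support (x + c)) by ring.
  apply (is_derive_comp primitive (fun y => y + c)); [apply primitive_derive|].
  auto_derive; [exact I | ring].
Qed.

(* Since the support function is periodic, the integral over a period does not depend on
   where the period starts. *)
Lemma primitive_period_increment (x : R) :
  primitive (x + 2 * PI) - primitive x = primitive (0 + 2 * PI) - primitive 0.
Proof.
  assert (D : forall c, derivable_pt_lim (fun y => primitive (y + 2 * PI) - primitive y) c 0).
  { intro c. apply is_derive_Reals.
    replace 0 with (support (c + 2 * PI) - support c) by (rewrite support_periodic; ring).
    apply @is_derive_minus; [apply primitive_shift_derive | apply primitive_derive]. }
  destruct (MVT_abs (fun y => primitive (y + 2 * PI) - primitive y) (fun _ => 0) 0 x)
    as [c [Hc _]]; [intros; apply D|].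
  rewrite Rabs_R0, Rmult_0_l in Hc. apply Rabs_eq_0 in Hc. lra.
Qed.

(* The auxiliary functional of the direction t, for weights A, B and opening g between the
   normals of the two support lines; A > 0 is only needed from [stationarity] on. *)
Variables A B g : R.

Definition phi (t : R) : R :=
  A * (support t + support (t + g)) - B * (primitive (t + g) - primitive t).

Definition window_min (tm : R) : Prop := forall s, tm - PI < s < tm + PI -> phi tm <= phi s.

Lemma phi_periodic (t : R) : phi (t + 2 * PI) = phi t.
Proof.
  unfold phi. replace (t + 2 * PI + g) with (t + g + 2 * PI) by ring.
  rewrite !support_periodic.
  pose proof (primitive_period_increment t). pose proof (primitive_period_increment (t + g)).
  replace (primitive (t + g + 2 * PI) - primitive (t + 2 * PI))
    with (primitive (t + g) - primitive t) by lra.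
  reflexivity.
Qed.

Lemma phi_continuous (t : R) : continuity_pt phi t.
Proof.
  assert (Hs : forall c, continuity_pt (fun y => support (y + c)) t).
  { intro c. apply (lipschitz_continuous _ (2 * M)); [pose proof bound_nonneg; lra|].
    intros a b. replace (a - b) with (a + c - (b + c)) by ring. apply support_lipschitz. }
  assert (Hp : forall c, continuity_pt (fun y => primitive (y + c)) t).
  { intro c. apply derivable_continuous_pt. exists (support (t + c)).
    apply is_derive_Reals, primitive_shift_derive. }
  unfold phi.
  apply (continuity_pt_minus (fun y => A * (support y + support (y + g)))
                             (fun y => B * (primitive (y + g) - primitive y))).
  - apply (continuity_pt_scal (fun y => support y + support (y + g))).
    apply (continuity_pt_plus support (fun y => support (y + g))); [|apply Hs].
    apply support_continuous.
  - apply (continuity_pt_scal (fun y => primitive (y + g) - primitive y)).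
    apply (continuity_pt_minus (fun y => primitive (y + g)) primitive); [apply Hp|].
    apply derivable_continuous_pt. exists (support t). apply is_derive_Reals, primitive_derive.
Qed.

(* A continuous 2π-periodic function attains its minimum; we only record minimality on a
   window of width 2π around the minimiser, which is what Fermat's rule needs. *)
Lemma phi_minimum : exists tm, window_min tm.
Proof.
  pose proof PI_RGT_0.
  destruct (continuity_ab_min phi 0 (2 * PI)) as [tm [Hmin Htm]];
    [lra | intros; apply phi_continuous|].
  exists tm. intros s Hs.
  destruct (Rle_lt_dec 0 s) as [H0|H0]; [destruct (Rle_lt_dec s (2 * PI)) as [H2|H2]|].
  - apply Hmin; lra.
  - replace s with (s - 2 * PI + 2 * PI) by ring. rewrite phi_periodic. apply Hmin; lra.
  - rewrite <- (phi_periodic s). apply Hmin; lra.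
Qed.

Hypothesis A_pos : 0 < A.

(* Fermat's rule at a minimiser of [phi]: freezing the contact points P, Q of the two
   support lines gives a smooth upper bound of [phi] touching it at tm, whose derivative
   must vanish there. *)
Lemma stationarity (tm : R) : window_min tm ->
  forall P Q, S P -> S Q -> dot P (dir tm) = support tm ->
  dot Q (dir (tm + g)) = support (tm + g) ->
  A * (dot P (dirL tm) + dot Q (dirL (tm + g))) = B * (support (tm + g) - support tm).
Proof.
  intros Hmin P Q HP HQ EP EQ.
  set (F := fun s => A * (dot P (dir s) + dot Q (dir (s + g)))
                     - B * (primitive (s + g) - primitive s)).
  assert (HF : derivable_pt_lim F tm
     (A * (dot P (dirL tm) + dot Q (dirL (tm + g))) - B * (support (tm + g) - support tm))).
  { apply is_derive_Reals. unfold F.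
    apply @is_derive_minus; apply @is_derive_scal; apply @is_derive_plus.
    - apply dir_dot_derive.
    - replace (dot Q (dirL (tm + g))) with (1 * dot Q (dirL (tm + g))) by ring.
      apply (is_derive_comp (fun s => dot Q (dir s)) (fun s => s + g));
        [apply dir_dot_derive | auto_derive; [exact I | ring]].
    - apply primitive_shift_derive.
    - replace (- support tm) with (opp (support tm)) by reflexivity.
      apply @is_derive_opp, primitive_derive. }
  assert (F_window_min : forall s, tm - PI < s < tm + PI -> F tm <= F s).
  { intros s Hs. apply Rle_trans with (phi s).
    - unfold F. rewrite EP, EQ. apply Hmin, Hs.
    - unfold F, phi. pose proof (support_le s P HP). pose proof (support_le (s + g) Q HQ).
      nra. }
  pose proof PI_RGT_0.
  assert (Hcrit : A * (dot P (dirL tm) + dot Q (dirL (tm + g)))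
                  - B * (support (tm + g) - support tm) = 0).
  { apply (deriv_minimum F (tm - PI) (tm + PI) tm (exist _ _ HF)); try lra.
    intros; apply F_window_min; lra. }
  lra.
Qed.

(* At a minimiser of phi, each support line meets S in a single point: two contact points
   would have the same tangential coordinate by [stationarity], hence coincide. *)
Lemma contact_unique_left (tm : R) :
  window_min tm -> forall q, S q -> dot q (dir tm) = support tm -> q = X tm.
Proof.
  intros Hmin q Hq Eq.
  pose proof (stationarity tm Hmin q (X (tm + g)) Hq (X_in _) Eq eq_refl) as H1.
  pose proof (stationarity tm Hmin (X tm) (X (tm + g)) (X_in _) (X_in _) eq_refl eq_refl) as H2.
  apply (pt_eq_frame tm); [exact Eq|].
  apply (Rmult_eq_reg_l A); [lra | apply Rgt_not_eq, A_pos].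
Qed.

Lemma contact_unique_right (tm : R) :
  window_min tm -> forall q, S q -> dot q (dir (tm + g)) = support (tm + g) -> q = X (tm + g).
Proof.
  intros Hmin q Hq Eq.
  pose proof (stationarity tm Hmin (X tm) q (X_in _) Hq eq_refl Eq) as H1.
  pose proof (stationarity tm Hmin (X tm) (X (tm + g)) (X_in _) (X_in _) eq_refl eq_refl) as H2.
  apply (pt_eq_frame (tm + g)); [exact Eq|].
  apply (Rmult_eq_reg_l A); [lra | apply Rgt_not_eq, A_pos].
Qed.

End SupportFunction.

(* With weights cos(a/2), sin(a/2) and g = π - a, the stationarity relation is equivalent
   (by trigonometric algebra) to the equality of the offsets of each contact point from
   the other support line; these offsets are the distances to the apex times sin g. *)
Lemma balanced_offsets (a t : R) (P Q : pt) :
  cos (a / 2) * (dot P (dirL t) + dot Q (dirL (t + (PI - a)))) =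
    sin (a / 2) * (dot Q (dir (t + (PI - a))) - dot P (dir t)) ->
  dot P (dir (t + (PI - a))) - dot Q (dir (t + (PI - a))) = dot Q (dir t) - dot P (dir t).
Proof.
  set (c := cos (a / 2)). set (s := sin (a / 2)).
  assert (Hcg : cos (PI - a) = s * s - c * c).
  { unfold c, s. rewrite cos_minus, cos_PI, sin_PI.
    replace (cos a) with (cos (2 * (a / 2))) by (f_equal; field). rewrite cos_2a. ring. }
  assert (Hsg : sin (PI - a) = 2 * s * c).
  { unfold c, s. rewrite sin_minus, cos_PI, sin_PI.
    replace (sin a) with (sin (2 * (a / 2))) by (f_equal; field). rewrite sin_2a. ring. }
  assert (Hcs : c * c + s * s = 1) by apply cos_sin_sq.
  unfold dot, dir, dirL; cbn [fst snd].
  rewrite cos_plus, sin_plus, Hcg, Hsg. intro H. nsatz.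
Qed.

Section WedgeGeometry.

Variables t g : R.
Hypothesis sin_g_pos : 0 < sin g.

Let sin_g_expand : sin g = sin (t + g) * cos t - cos (t + g) * sin t.
Proof. rewrite <- sin_minus. f_equal. ring. Qed.

Lemma apex_exists (h1 h2 : R) :
  exists O, dot O (dir t) = h1 /\ dot O (dir (t + g)) = h2.
Proof.
  exists ((h1 * sin (t + g) - h2 * sin t) / sin g, (h2 * cos t - h1 * cos (t + g)) / sin g).
  pose proof sin_g_pos. rewrite sin_g_expand in *.
  unfold dot, dir; cbn [fst snd]. split; field; lra.
Qed.

Lemma wedge_coordinates (O p : pt) :
  p = padd O (padd
        (pscale ((dot p (dir (t + g)) - dot O (dir (t + g))) / sin g) (dirL t))
        (pscale ((dot p (dir t) - dot O (dir t)) / sin g) (dirR (t + g)))).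
Proof.
  pose proof sin_g_pos. rewrite sin_g_expand in *. destruct p, O.
  unfold dot, dir, dirL, dirR, padd, pscale; cbn [fst snd]. f_equal; field; lra.
Qed.

Lemma left_ray_point (O p : pt) : dot p (dir t) = dot O (dir t) ->
  p = padd O (pscale ((dot p (dir (t + g)) - dot O (dir (t + g))) / sin g) (dirL t)).
Proof.
  intro E. rewrite (wedge_coordinates O p) at 1. rewrite E, Rminus_diag.
  destruct O. unfold padd, pscale; cbn [fst snd]. f_equal; unfold Rdiv; ring.
Qed.

Lemma right_ray_point (O p : pt) : dot p (dir (t + g)) = dot O (dir (t + g)) ->
  p = padd O (pscale ((dot p (dir t) - dot O (dir t)) / sin g) (dirR (t + g))).
Proof.
  intro E. rewrite (wedge_coordinates O p) at 1. rewrite E, Rminus_diag.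
  destruct O. unfold padd, pscale; cbn [fst snd]. f_equal; unfold Rdiv; ring.
Qed.

End WedgeGeometry.

(* A supporting line meeting S in the single point X meets conv S only at X: the open
   half-plane beyond the line together with X is a convex set containing S. *)
Lemma conv_hull_face (S : pt -> Prop) (X e : pt) :
  (forall q, S q -> dot X e <= dot q e) -> (forall q, S q -> dot q e = dot X e -> q = X) ->
  forall p, conv_hull S p -> dot p e = dot X e -> p = X.
Proof.
  intros Hmin Hun p Hp Ep.
  set (C := fun q => dot X e < dot q e \/ q = X).
  assert (HC : C p).
  { apply Hp.
    - intros q1 q2 s Hq1 Hq2 Hs.
      assert (Hlin : dot (padd (pscale (1 - s) q1) (pscale s q2)) e
                     = (1 - s) * dot q1 e + s * dot q2 e)
        by (unfold dot, padd, pscale; cbn [fst snd]; ring).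
      assert (Hge : forall q, C q -> dot X e <= dot q e) by (intros q [H| ->]; lra).
      pose proof (Hge q1 Hq1). pose proof (Hge q2 Hq2).
      destruct (Req_dec s 0) as [->|Hs0].
      { replace (padd (pscale (1 - 0) q1) (pscale 0 q2)) with q1; [exact Hq1|].
        destruct q1; unfold padd, pscale; cbn [fst snd]; f_equal; ring. }
      destruct (Req_dec s 1) as [->|Hs1].
      { replace (padd (pscale (1 - 1) q1) (pscale 1 q2)) with q2; [exact Hq2|].
        destruct q2; unfold padd, pscale; cbn [fst snd]; f_equal; ring. }
      destruct Hq1 as [H1| ->]; [left; rewrite Hlin; nra|].
      destruct Hq2 as [H2| ->]; [left; rewrite Hlin; nra|].
      right. destruct X; unfold padd, pscale; cbn [fst snd]; f_equal; ring.
    - intros x Hx. destruct (Rle_lt_or_eq_dec _ _ (Hmin x Hx)) as [H|H]; [left; exact H|].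
      right. apply Hun; auto. }
  destruct HC as [H|H]; [lra | exact H].
Qed.

Lemma conv_hull_incl (S : pt -> Prop) (p : pt) : S p -> conv_hull S p.
Proof. intros Hp C _ HS. apply HS, Hp. Qed.

Lemma edge_ray_meets_hull (S : pt -> Prop) (O u e X : pt) (s : R) :
  dot u e = 0 -> dot O e = dot X e -> 0 <= s -> X = padd O (pscale s u) -> S X ->
  (forall q, S q -> dot X e <= dot q e) -> (forall q, S q -> dot q e = dot X e -> q = X) ->
  forall p, (ray O u p /\ conv_hull S p) <-> p = X.
Proof.
  intros Hue HO Hs EX HX Xmin Xuniq p. split.
  - intros [Hray Hconv]. apply (conv_hull_face S X e Xmin Xuniq p Hconv).
    rewrite <- HO. exact (ray_dot O u e p Hue Hray).
  - intros ->. split; [exists s; split; assumption | apply conv_hull_incl, HX].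
Qed.

Lemma circumscribed_wedge (S : pt -> Prop) (alpha t : R) (X Y : pt) :
  0 < alpha < PI -> S X -> S Y ->
  (forall p, S p -> dot X (dir t) <= dot p (dir t)) ->
  (forall p, S p -> dot Y (dir (t + (PI - alpha))) <= dot p (dir (t + (PI - alpha)))) ->
  (forall q, S q -> dot q (dir t) = dot X (dir t) -> q = X) ->
  (forall q, S q -> dot q (dir (t + (PI - alpha))) = dot Y (dir (t + (PI - alpha))) -> q = Y) ->
  dot X (dir (t + (PI - alpha))) - dot Y (dir (t + (PI - alpha)))
    = dot Y (dir t) - dot X (dir t) ->
  exists (O u v : pt),
    norm u = 1 /\ norm v = 1 /\ dot u v = cos alpha /\
    (forall p, S p -> wedge O u v p) /\
    (forall p, (ray O u p /\ conv_hull S p) <-> p = X) /\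
    (forall p, (ray O v p /\ conv_hull S p) <-> p = Y) /\
    pdist O X = pdist O Y.
Proof.
  intros Ha HX HY Xmin Ymin Xuniq Yuniq Hbal.
  set (g := PI - alpha) in *.
  assert (Hg : 0 < sin g) by (unfold g; rewrite sin_minus, sin_PI, cos_PI; ring_simplify;
                               apply sin_gt_0; lra).
  destruct (apex_exists t g Hg (dot X (dir t)) (dot Y (dir (t + g)))) as [O [HO1 HO2]].
  set (sX := (dot X (dir (t + g)) - dot O (dir (t + g))) / sin g).
  set (sY := (dot Y (dir t) - dot O (dir t)) / sin g).
  assert (EX : X = padd O (pscale sX (dirL t))) by (apply (left_ray_point t g Hg); congruence).
  assert (EY : Y = padd O (pscale sY (dirR (t + g))))
    by (apply (right_ray_point t g Hg); congruence).
  assert (HsX : 0 <= sX)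
    by (apply Rdiv_le_0_compat; [pose proof (Ymin X HX); lra | exact Hg]).
  assert (HsY : 0 <= sY)
    by (apply Rdiv_le_0_compat; [pose proof (Xmin Y HY); lra | exact Hg]).
  exists O, (dirL t), (dirR (t + g)).
  split; [apply norm_unit, dirL_unit|].
  split; [apply norm_unit, dirR_unit|].
  split; [rewrite dot_dirL_dirR; unfold g; rewrite cos_minus, cos_PI, sin_PI; ring|].
  split.
  { intros p Hp. rewrite (wedge_coordinates t g Hg O p).
    eexists; eexists; split; [|split; [|reflexivity]]; apply Rdiv_le_0_compat; try exact Hg.
    - pose proof (Ymin p Hp). lra.
    - pose proof (Xmin p Hp). lra. }
  split; [exact (edge_ray_meets_hull S O _ _ X sX (dirL_perp t) HO1 HsX EX HX Xmin Xuniq)|].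
  split; [exact (edge_ray_meets_hull S O _ _ Y sY (dirR_perp (t + g)) HO2 HsY EY HY Ymin Yuniq)|].
  rewrite EX, EY at 1. rewrite (pdist_along O), (pdist_along O);
    auto using dirL_unit, dirR_unit.
  unfold sX, sY. rewrite HO1, HO2. f_equal. lra.
Qed.

Theorem mainTheorem4 (S : pt -> Prop) (alpha : R) :
  (exists p, S p) -> compact_set S -> 0 < alpha < PI ->
  exists (O u v X Y : pt),
    norm u = 1 /\ norm v = 1 /\ dot u v = cos alpha /\
    (forall p, S p -> wedge O u v p) /\
    (forall p, (ray O u p /\ conv_hull S p) <-> p = X) /\
    (forall p, (ray O v p /\ conv_hull S p) <-> p = Y) /\
    S X /\ S Y /\
    pdist O X = pdist O Y.
Proof.
  intros Hne Hcomp Ha.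
  destruct (choice _ (fun t => linear_min_attained S t Hne Hcomp)) as [X HX].
  assert (X_in : forall t, S (X t)) by (intro t; apply HX).
  assert (X_min : forall t p, S p -> dot (X t) (dir t) <= dot p (dir t)) by (intro t; apply HX).
  destruct Hcomp as [_ [M S_bounded]].
  set (g := PI - alpha).
  assert (HA : 0 < cos (alpha / 2)) by (apply cos_gt_0; lra).
  destruct (phi_minimum S X X_in X_min M S_bounded (cos (alpha / 2)) (sin (alpha / 2)) g)
    as [tm Htm].
  destruct (circumscribed_wedge S alpha tm (X tm) (X (tm + g)))
    as [O [u [v [Hu [Hv [Huv [Hwedge [HrayX [HrayY Hdist]]]]]]]]]; auto.
  - eapply contact_unique_left; eauto.
  - eapply contact_unique_right; eauto.
  - apply balanced_offsets. eapply stationarity; eauto.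
  - pose proof (X_in tm). pose proof (X_in (tm + g)).
    exists O, u, v, (X tm), (X (tm + g)). tauto.
Qed.
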